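(* Let $(G,\alpha)$ be a finite Hom-group, $\mathbb{K}$ a field, and $\mathbb{K}G$ the Hom-group Hopf algebra. If $A$ is a Hom-sub-Hopf algebra of $\mathbb{K}G$, then $\dim_{\mathbb{K}}(A)$ divides $|G|$.
   Context: A Hom-group is a tuple $(G,\mu,1,\alpha)$ where $G$ is a set, $\mu:G\times G\to G$ is a binary operation written $\mu(g,h)=gh$, $1\in G$ is a distinguished element, and $\alpha:G\to G$ is a bijection, such that: (1) Hom-associativity: $\alpha(g)(hk)=(gh)\alpha(k)$ for all $g,h,k\in G$; (2) $\alpha(gk)=\alpha(g)\alpha(k)$ for all $g,k$; (3) Hom-unitality: $g1=1g=\alpha(g)$ for all $g$, and $\alpha(1)=1$; (4) for every $g\in G$ there exists $g^{-1}\in G$ with $gg^{-1}=g^{-1}g=1$ (such an inverse is unique). The Hom-group Hopf algebra $\mathbb{K}G$ is the $\mathbb{K}$-vector space with basis $G$, with multiplication the bilinear extension of that of $G$, unit $1$, twisting map the linear extension of $\alpha$, comultiplication $\Delta(g)=g\otimes g$, counit $\varepsilon(g)=1$, antipode $S(g)=g^{-1}$ (extended linearly), and coalgebra twisting map $\mathrm{Id}$. A Hom-sub-Hopf algebra of $\mathbb{K}G$ is a subspace $A$ containing $1$ with $AA\subseteq A$, $\alpha(A)= A$, $\Delta(A)\subseteq A\otimes A$, and $S(A)\subseteq A$, so that $A$ with the restricted structure maps is itself a Hom-Hopf algebra. *)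

From HB Require Import structures.
From mathcomp Require Import all_boot all_order all_algebra.
Set Implicit Arguments. Unset Strict Implicit. Unset Printing Implicit Defensive.
Import GRing.Theory.
Local Open Scope ring_scope.

Record homGroup (G : finType) := HomGroup {
  hmul : G -> G -> G;
  hone : G;
  halpha : G -> G;
  halpha_bij : bijective halpha;
  hom_assoc : forall g h k, hmul (halpha g) (hmul h k) = hmul (hmul g h) (halpha k);
  halpha_mul : forall g k, halpha (hmul g k) = hmul (halpha g) (halpha k);
  hom_unitl : forall g, hmul g hone = halpha g;
  hom_unitr : forall g, hmul hone g = halpha g;
  halpha_one : halpha hone = hone;
  hom_inv : forall g, exists h, hmul g h = hone /\ hmul h g = hone
}.

Section HomGroupAlgebra.
Variables (G : finType) (H : homGroup G) (K : fieldType).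

Definition hinv (g : G) : G :=
  odflt (hone H) [pick h | (hmul H g h == hone H) && (hmul H h g == hone H)].

(* KG is realised as the K-vector space of functions G -> K, the basis
   element g being the indicator function of g. *)
Definition KG := {ffun G -> K^o}.

Definition hbasis (g : G) : KG := [ffun x => if x == g then 1 else 0].

Definition kg_mul (a b : KG) : KG :=
  [ffun x => \sum_(y : G) \sum_(z : G | hmul H y z == x) a y * b z].

Definition kg_one : KG := hbasis (hone H).

Definition kg_alpha (a : KG) : KG := [ffun x => \sum_(g : G | halpha H g == x) a g].

Definition kg_S (a : KG) : KG := [ffun x => \sum_(g : G | hinv g == x) a g].

(* KG (x) KG is realised as functions G * G -> K, g (x) h being the
   indicator of (g, h). *)
Definition KG2 := {ffun (G * G)%type -> K^o}.

Definition kg_tens (a b : KG) : KG2 := [ffun p => a p.1 * b p.2].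

Definition kg_Delta (a : KG) : KG2 := [ffun p => if p.1 == p.2 then a p.1 else 0].

Definition tensv (A B : {vspace KG}) : {vspace KG2} :=
  <<[seq kg_tens a b | a <- vbasis A, b <- vbasis B]>>%VS.

Definition hom_sub_hopf (A : {vspace KG}) : Prop :=
  [/\ kg_one \in A,
      (forall a b, a \in A -> b \in A -> kg_mul a b \in A),
      (forall a, a \in A -> kg_alpha a \in A) /\
      (forall b, b \in A -> exists2 a, a \in A & kg_alpha a = b),
      (forall a, a \in A -> kg_Delta a \in tensv A A)
    & (forall a, a \in A -> kg_S a \in A)].

End HomGroupAlgebra.

(* Slicing Delta(a) = sum_g a(g) g (x) g, which lies in A (x) A, at a second
   coordinate g shows that a(g) g lies in A: so A is spanned by the set S of
   basis elements g that lie in A, and dim A = |S| since these are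
   independent.  Twisting the product of the Hom-group to
   x . y := alpha^-1(x y) gives an ordinary group structure on G with the same
   unit and inverses.  S contains 1 and is closed under the product and under
   alpha^-1 (A is closed under the product and alpha(A) = A), hence is a
   subgroup of the twisted group, and Lagrange's theorem applies. *)

From HB Require Import structures.
From mathcomp Require Import all_boot all_order all_algebra all_fingroup.
Set Implicit Arguments. Unset Strict Implicit. Unset Printing Implicit Defensive.

Section Untwisting.
Variables (G : finType) (H : homGroup G).

Definition halpha_inv : G -> G := invF (bij_inj (halpha_bij H)).

Lemma halphaK : cancel (halpha H) halpha_inv. Proof. exact: invF_f. Qed.
Lemma halpha_invK : cancel halpha_inv (halpha H). Proof. exact: f_invF. Qed.

Lemma halpha_inv_mul x y :
  halpha_inv (hmul H x y) = hmul H (halpha_inv x) (halpha_inv y).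
Proof.
by apply: (bij_inj (halpha_bij H)); rewrite halpha_invK halpha_mul !halpha_invK.
Qed.

Lemma halpha_inv_one : halpha_inv (hone H) = hone H.
Proof. by rewrite -{1}(halpha_one H) halphaK. Qed.

Lemma hinvP g : hmul H g (hinv H g) = hone H /\ hmul H (hinv H g) g = hone H.
Proof.
rewrite /hinv; case: pickP => [h /andP[/eqP -> /eqP ->] //|no_inv].
have [h [gh1 hg1]] := hom_inv H g.
by have := no_inv h; rewrite gh1 hg1 !eqxx.
Qed.

Definition untwisted_mul x y := halpha_inv (hmul H x y).

Lemma untwisted_mulA : associative untwisted_mul.
Proof.
move=> x y z; rewrite /untwisted_mul; congr halpha_inv; rewrite !halpha_inv_mul.
by rewrite -{1}(halpha_invK x) -{2}(halpha_invK z) hom_assoc.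
Qed.

Lemma untwisted_mul1 : left_id (hone H) untwisted_mul.
Proof. by move=> x; rewrite /untwisted_mul hom_unitr halphaK. Qed.

Lemma untwisted_mulV : left_inverse (hone H) (hinv H) untwisted_mul.
Proof. by move=> x; rewrite /untwisted_mul (hinvP x).2 halpha_inv_one. Qed.

End Untwisting.

Definition untwisted (G : finType) (H : homGroup G) : Type := G.

HB.instance Definition _ (G : finType) (H : homGroup G) :=
  Finite.on (untwisted H).
HB.instance Definition _ (G : finType) (H : homGroup G) :=
  Finite_isGroup.Build (untwisted H)
    (@untwisted_mulA G H) (@untwisted_mul1 G H) (@untwisted_mulV G H).

Lemma card_hom_subgroup_dvdn (G : finType) (H : homGroup G) (S : {set G}) :
  hone H \in S -> (forall x y, x \in S -> y \in S -> hmul H x y \in S) ->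
  (forall x, x \in S -> halpha_inv H x \in S) -> (#|S| %| #|G|)%N.
Proof.
move=> S1 SM Salpha_inv.
pose toU : G -> untwisted H := id.
have toU_bij : bijective toU by exists id.
have gS : group_set (toU @: S).
  apply/group_setP; split=> [|_ _ /imsetP[x xS ->] /imsetP[y yS ->]].
    exact: imset_f.
  exact/imset_f/Salpha_inv/SM.
have := cardSg (subsetT (Group gS)).
by rewrite cardsT card_imset ?(bij_inj toU_bij) -?(bij_eq_card toU_bij).
Qed.

Import GRing.Theory.
Local Open Scope ring_scope.

Section GroupAlgebraBasis.
Variables (G : finType) (K : fieldType).

Local Notation KG := (KG G K).
Local Notation KG2 := (KG2 G K).
Local Notation hbasis := (@hbasis G K).

Lemma hbasisE g x : hbasis g x = if x == g then 1 else 0.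
Proof. by rewrite ffunE. Qed.

Lemma sum_hbasisE (I : finType) (f : I -> G) (c : I -> K) i :
  injective f -> (\sum_j c j *: hbasis (f j)) (f i) = c i.
Proof.
move=> inj_f; rewrite sum_ffunE (bigD1 i) //= big1 => [|j ji].
  by rewrite !ffunE eqxx addr0 [_ *: _]mulr1.
by rewrite !ffunE (inj_eq inj_f) eq_sym (negbTE ji) scaler0.
Qed.

Lemma kg_hbasis_expansion (a : KG) : a = \sum_g a g *: hbasis g.
Proof. by apply/ffunP => x; rewrite (@sum_hbasisE _ id). Qed.

Lemma free_hbasis (s : seq G) : uniq s -> free (map hbasis s).
Proof.
case: s => [_|x0 s']; first exact: nil_free.
move: (x0 :: s') => s s_uniq.
apply/(@freeP _ _ _ (in_tuple _)) => c sum_c0 i.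
pose f (j : 'I_(size (map hbasis s))) := nth x0 s j.
have inj_f : injective f.
  move=> j k /eqP; rewrite /f nth_uniq -?(size_map hbasis) // => /eqP.
  exact: val_inj.
have := congr1 (fun a : KG => a (f i)) sum_c0.
rewrite /= ffunE -(sum_hbasisE c i inj_f) => <-.
apply: (congr1 (fun a : KG => a (f i))); apply: eq_bigr => j _.
by rewrite (nth_map x0) // -(size_map hbasis).
Qed.

Definition kg_slice (g : G) (v : KG2) : KG := [ffun x => v (x, g)].

Lemma kg_slice_is_linear g : linear (kg_slice g).
Proof. by move=> c u v; apply/ffunP => x; rewrite !ffunE. Qed.

HB.instance Definition _ g :=
  GRing.isLinear.Build K KG2 KG _ (kg_slice g) (kg_slice_is_linear g).

Lemma kg_slice_tens g a b : kg_slice g (kg_tens a b) = b g *: a.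
Proof. by apply/ffunP => x; rewrite !ffunE mulrC. Qed.

Lemma kg_slice_Delta g a : kg_slice g (kg_Delta a) = a g *: hbasis g.
Proof.
apply/ffunP => x; rewrite !ffunE /=.
by case: eqP => [->|_]; rewrite ?[_ *: _]mulr1 ?scaler0.
Qed.

Lemma kg_slice_tensv g (A : {vspace KG}) v : v \in tensv A A -> kg_slice g v \in A.
Proof.
suff sub_preim : (tensv A A <= linfun (kg_slice g) @^-1: A)%VS.
  by move/(subvP sub_preim); rewrite -memv_preim lfunE.
apply/span_subvP => _ /allpairsP[[a b] /= [aA bA ->]].
by rewrite -memv_preim lfunE /= kg_slice_tens memvZ ?vbasis_mem.
Qed.

Definition kg_subcoalgebra (A : {vspace KG}) :=
  forall a, a \in A -> kg_Delta a \in tensv A A.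

Definition group_likes (A : {vspace KG}) : {set G} := [set g | hbasis g \in A].

Section Subcoalgebra.
Variables (A : {vspace KG}) (A_coalg : kg_subcoalgebra A).

Lemma hbasis_support_mem a g : a \in A -> a g != 0 -> hbasis g \in A.
Proof.
move=> aA ag_neq0; have := kg_slice_tensv g (A_coalg aA).
by rewrite kg_slice_Delta => agA; rewrite -(scalerK ag_neq0 (hbasis g)) memvZ.
Qed.

Lemma span_group_likes : <<map hbasis (enum (group_likes A))>>%VS = A.
Proof.
apply/eqP; rewrite eqEsubv; apply/andP; split.
  by apply/span_subvP => _ /mapP[g gA ->]; rewrite mem_enum inE in gA.
apply/subvP => a aA; rewrite (kg_hbasis_expansion a); apply: memv_suml => g _.
have [->|ag_neq0] := eqVneq (a g) 0; first by rewrite scale0r mem0v.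
by rewrite memvZ // memv_span // map_f // mem_enum inE (hbasis_support_mem aA).
Qed.

Lemma dim_group_likes : \dim A = #|group_likes A|.
Proof.
rewrite -[in LHS]span_group_likes (eqP (free_hbasis (enum_uniq _))).
by rewrite size_map cardE.
Qed.

End Subcoalgebra.
End GroupAlgebraBasis.

Section HomGroupAlgebra.
Variables (G : finType) (H : homGroup G) (K : fieldType).

Local Notation KG := (KG G K).
Local Notation hbasis := (@hbasis G K).

Lemma kg_mul_hbasis g h : kg_mul H (hbasis g) (hbasis h) = hbasis (hmul H g h).
Proof.
apply/ffunP => x; rewrite !ffunE (bigD1 g) //= [X in _ + X]big1 => [|y /negbTE yg].
  rewrite addr0 big_mkcond (bigD1 h) //= [X in _ + X]big1 => [|z /negbTE zh].
    by rewrite addr0 !hbasisE !eqxx mulr1 eq_sym.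
  by rewrite !hbasisE zh mulr0 if_same.
by apply: big1 => z _; rewrite hbasisE yg mul0r.
Qed.

Lemma kg_alphaE (a : KG) x : kg_alpha H a x = a (halpha_inv H x).
Proof.
rewrite ffunE; apply: big_pred1 => g /=.
by apply/eqP/eqP => [<-|->]; rewrite ?halphaK ?halpha_invK.
Qed.

Lemma kg_alpha_eq_hbasis (a : KG) g :
  kg_alpha H a = hbasis g -> a = hbasis (halpha_inv H g).
Proof.
move=> alpha_a; apply/ffunP => x.
have := congr1 (fun b : KG => b (halpha H x)) alpha_a.
rewrite /= kg_alphaE halphaK => ->; rewrite !hbasisE.
congr (if _ then _ else _).
by apply/eqP/eqP => [<-|->]; rewrite ?halphaK ?halpha_invK.
Qed.

End HomGroupAlgebra.

Theorem mainTheorem12 (G : finType) (H : homGroup G) (K : fieldType)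
  (A : {vspace KG G K}) :
  hom_sub_hopf H A -> (\dim A %| #|G|)%N.
Proof.
case=> A1 A_mul [_ alpha_onto] A_coalg _.
rewrite (dim_group_likes A_coalg).
apply: (card_hom_subgroup_dvdn (H := H)); first by rewrite inE; exact: A1.
- by move=> x y; rewrite !inE -kg_mul_hbasis; apply: A_mul.
- move=> x; rewrite !inE => xA; have [a aA alpha_a] := alpha_onto _ xA.
  by rewrite -(kg_alpha_eq_hbasis alpha_a).
Qed.
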